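(* Let $\beta>0$, $\bar\mu\in\mathbb{R}^{N\times p}$, $g\in C^3(\mathbb{R})$, and $m=g\circ G_\beta:\mathbb{R}^{N\times p}\to\mathbb{R}$. Then for every $X\in\mathbb{R}^{N\times p}$, $$\sum_{k\in[N],j\in[p]}\Big|\frac{\partial m(X)}{\partial X_{kj}}\Big|\le\|g'\|_\infty,$$ $$\sum_{k_1,k_2\in[N],\,j_1,j_2\in[p]}\Big|\frac{\partial^2m(X)}{\partial X_{k_1j_1}\partial X_{k_2j_2}}\Big|\le\|g''\|_\infty+4\beta\|g'\|_\infty,$$ $$\sum_{k_1,k_2,k_3\in[N],\,j_1,j_2,j_3\in[p]}\Big|\frac{\partial^3m(X)}{\partial X_{k_1j_1}\partial X_{k_2j_2}\partial X_{k_3j_3}}\Big|\le\|g'''\|_\infty+16\beta\|g''\|_\infty+24\beta^2\|g'\|_\infty.$$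
   Context: For $k\in[N]$ and $v\in\mathbb{R}^p$, $F_{\beta,\bar\mu_k}(v)=\beta^{-1}\log\big(\sum_{j=1}^p\exp(\beta\{v_j+\bar\mu_{kj}\})\big)$; for $X\in\mathbb{R}^{N\times p}$ with rows $X_{1\cdot},\dots,X_{N\cdot}$, $F_{\beta,\bar\mu}(X)=(F_{\beta,\bar\mu_1}(X_{1\cdot}),\dots,F_{\beta,\bar\mu_N}(X_{N\cdot}))'\in\mathbb{R}^N$; for $u\in\mathbb{R}^N$, $F_{\beta,0}(u)=\beta^{-1}\log\sum_{k=1}^N\exp(\beta u_k)$; and $G_\beta(X)=-F_{\beta,0}(-F_{\beta,\bar\mu}(X))$. $\|g^{(r)}\|_\infty=\sup_{t\in\mathbb{R}}|g^{(r)}(t)|$. *)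

From HB Require Import structures.
From mathcomp Require Import all_boot all_order all_algebra.
From mathcomp Require Import all_classical all_reals all_analysis.
Set Implicit Arguments. Unset Strict Implicit. Unset Printing Implicit Defensive.
Import Order.TTheory GRing.Theory Num.Theory.
Import numFieldNormedType.Exports.
Local Open Scope ring_scope.

Section Defs.
Variable R : realType.

Definition Fk (beta : R) (N p : nat) (mu : 'M[R]_(N, p)) (k : 'I_N) (v : 'rV[R]_p) : R :=
  beta^-1 * ln (\sum_(j < p) expR (beta * (v 0 j + mu k j))).

Definition Fmu (beta : R) (N p : nat) (mu : 'M[R]_(N, p)) (X : 'M[R]_(N, p)) : 'rV[R]_N :=
  \row_(k < N) Fk beta mu k (row k X).

Definition F0 (beta : R) (N : nat) (u : 'rV[R]_N) : R :=
  beta^-1 * ln (\sum_(k < N) expR (beta * u 0 k)).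

Definition Gbeta (beta : R) (N p : nat) (mu : 'M[R]_(N, p)) (X : 'M[R]_(N, p)) : R :=
  - F0 beta (- Fmu beta mu X).

Definition partial (N p : nat) (k : 'I_N) (j : 'I_p) (f : 'M[R]_(N, p) -> R)
    (X : 'M[R]_(N, p)) : R :=
  derive1 (fun t : R => f (X + t *: delta_mx k j)) 0.

Definition C3 (g : R -> R) : Prop :=
  [/\ forall x, derivable g x 1,
      forall x, derivable (derive1 g) x 1,
      forall x, derivable (derive1 (derive1 g)) x 1
    & continuous (derive1 (derive1 (derive1 g)))].

Definition supnorm (h : R -> R) : \bar R :=
  ereal_sup [set (`|h t|)%:E | t in setT].

End Defs.

From HB Require Import structures.
From mathcomp Require Import all_boot all_order all_algebra.
From mathcomp Require Import all_classical all_reals all_analysis.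
From mathcomp Require Import ring lra.
Import Order.TTheory GRing.Theory Num.Theory.
Import numFieldNormedType.Exports.
Set Implicit Arguments.
Unset Strict Implicit.
Unset Printing Implicit Defensive.
Local Open Scope ring_scope.

(* Write S_k = sum_j exp (beta (X_kj + mu_kj)) and T = sum_k 1 / S_k, so that
   G_beta = - beta^-1 ln T. Its gradient w_kj = exp (beta (X_kj + mu_kj)) / (S_k^2 T)
   is a probability vector on [N] x [p], and
     d_b w_a = beta w_a (delta_ab - 2 q_ab + w_b),
   where q_ab = [k_a = k_b] exp (beta (X_(k_a j_b) + mu_(k_a j_b))) / S_(k_a) is again a
   probability vector in b. Hence sum_b |d_b w_a| <= 4 beta w_a, and differentiating
   once more, sum_(b,c) |d_c d_b w_a| <= 24 beta^2 w_a. The derivatives of g o G_beta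
   are sums of products of derivatives of g at G_beta and of w, and the l1 norm of a
   gradient obeys the Leibniz inequality, so all the bounds reduce to averaging
   these estimates against w; the third one even holds with 12 beta for 16 beta. *)

Section NormSums.
Variables (R : numDomainType) (I : finType).

Lemma sumr_gt0 (i0 : I) (F : I -> R) : (forall i, 0 < F i) -> 0 < \sum_i F i.
Proof.
move=> F_gt0; rewrite (bigD1 i0) //= ltr_pwDl //.
by apply: sumr_ge0 => i _; apply/ltW.
Qed.

Lemma sumr_delta (i0 : I) (F : I -> R) : \sum_i (i == i0)%:R * F i = F i0.
Proof.
rewrite (bigD1 i0) //= eqxx mul1r big1 ?addr0 // => i /negbTE ->.
by rewrite mul0r.
Qed.

Lemma sum_normD (F G : I -> R) :
  \sum_i `|F i + G i| <= \sum_i `|F i| + \sum_i `|G i|.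
Proof. by rewrite -big_split ler_sum // => i _; apply: ler_normD. Qed.

Lemma sum_normM (x : R) (F : I -> R) : \sum_i `|x * F i| = `|x| * \sum_i `|F i|.
Proof. by rewrite mulr_sumr; apply: eq_bigr => i _; rewrite normrM. Qed.

Lemma sum_norm_leibniz (x y : R) (dx dy : I -> R) :
  \sum_i `|x * dy i + y * dx i| <= `|x| * \sum_i `|dy i| + `|y| * \sum_i `|dx i|.
Proof. by rewrite -!sum_normM; apply: sum_normD. Qed.

End NormSums.

Section PairSums.
Variables (V : nmodType) (I J : finType).

Lemma sum_pair (F : I * J -> V) : \sum_a F a = \sum_i \sum_j F (i, j).
Proof. by rewrite pair_big; apply: eq_bigr => -[i j] _. Qed.

Lemma sum_pairs2 (F : I * J -> I * J -> V) :
  \sum_i1 \sum_i2 \sum_j1 \sum_j2 F (i2, j2) (i1, j1) = \sum_a \sum_b F a b.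
Proof.
rewrite [RHS]exchange_big (sum_pair (fun b => \sum_a F a b)).
apply: eq_bigr => i1 _; rewrite exchange_big; apply: eq_bigr => j1 _.
by rewrite sum_pair.
Qed.

Lemma sum_pairs3 (F : I * J -> I * J -> I * J -> V) :
  \sum_i1 \sum_i2 \sum_i3 \sum_j1 \sum_j2 \sum_j3 F (i3, j3) (i2, j2) (i1, j1) =
  \sum_a \sum_b \sum_c F a b c.
Proof.
transitivity (\sum_c \sum_a \sum_b F a b c); last first.
  by rewrite exchange_big; apply: eq_bigr => a _; apply: exchange_big.
rewrite (sum_pair (fun c => \sum_a \sum_b F a b c)); apply: eq_bigr => i1 _.
under eq_bigr do rewrite exchange_big.
rewrite exchange_big; apply: eq_bigr => j1 _.
exact: (sum_pairs2 (fun a b => F a b (i1, j1))).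
Qed.

End PairSums.

Lemma is_derive_affine (R : realType) (x c t : R) : is_derive t 1 (fun s : R => x + s * c) c.
Proof.
have := is_deriveD (is_derive_cst x t 1)
  (is_deriveM (is_derive_id t 1) (is_derive_cst c t 1)).
by move=> D; apply: (is_derive_eq D); rewrite scaler0 !add0r /= [_%:A]mulr1.
Qed.

Lemma C3_is_derive (R : realType) (g : R -> R) : C3 g ->
  [/\ forall x : R, is_derive x 1 g (derive1 g x),
      forall x : R, is_derive x 1 (derive1 g) (derive1 (derive1 g) x)
    & forall x : R, is_derive x 1 (derive1 (derive1 g)) (derive1 (derive1 (derive1 g)) x)].
Proof. by case=> g1 g2 g3 _; split=> x; rewrite derive1E; apply: derivableP. Qed.

Section EntryDerivative.
Variables (R : realType) (N p : nat).
Local Notation M := 'M[R]_(N, p).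
Local Notation I := ('I_N * 'I_p)%type.

Definition is_partial (a : I) (f df : M -> R) :=
  forall X : M, is_derive (0 : R) 1 (fun t => f (X + t *: delta_mx a.1 a.2)) (df X).

Lemma partial_val k j f df : is_partial (k, j) f df -> partial k j f = df.
Proof.
move=> f_df; apply/funext => X; rewrite /partial derive1E.
exact: (@derive_val _ _ _ _ _ _ _ (f_df X)).
Qed.

Lemma is_partial_eq a f df df' : is_partial a f df -> df =1 df' -> is_partial a f df'.
Proof. by move=> f_df df_df' X; rewrite -df_df'. Qed.

Lemma is_partial_cst a c : is_partial a (fun _ => c) (fun _ => 0).
Proof. by move=> X; apply: is_derive_cst. Qed.

Lemma is_partial_entry a b : is_partial b (fun X => X a.1 a.2) (fun _ => (a == b)%:R).
Proof.
move=> X; have -> : (fun t : R => (X + t *: delta_mx b.1 b.2) a.1 a.2) =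
                    (fun t => X a.1 a.2 + t * (a == b)%:R).
  by apply/funext => t; rewrite !mxE; case: a b => [? ?] [? ?]; rewrite xpair_eqE.
exact: is_derive_affine.
Qed.

Lemma is_partialD a f g df dg : is_partial a f df -> is_partial a g dg ->
  is_partial a (fun X => f X + g X) (fun X => df X + dg X).
Proof. by move=> f_df g_dg X; apply: is_deriveD. Qed.

Lemma is_partialN a f df : is_partial a f df ->
  is_partial a (fun X => - f X) (fun X => - df X).
Proof. by move=> f_df X; apply: is_deriveN. Qed.

Lemma is_partialM a f g df dg : is_partial a f df -> is_partial a g dg ->
  is_partial a (fun X => f X * g X) (fun X => f X * dg X + g X * df X).
Proof.
move=> f_df g_dg X; have := is_deriveM (f_df X) (g_dg X).
by rewrite /= scale0r addr0.
Qed.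

Lemma is_partial_sum n a (f df : 'I_n -> M -> R) :
  (forall i, is_partial a (f i) (df i)) ->
  is_partial a (fun X => \sum_i f i X) (fun X => \sum_i df i X).
Proof.
move=> f_df X.
rewrite (_ : (fun t => _) = \sum_i (fun t : R => f i (X + t *: delta_mx a.1 a.2))).
  by apply: is_derive_sum => i; apply: f_df.
by apply/funext => t; rewrite fct_sumE.
Qed.

Lemma is_partial_comp a (h dh : R -> R) f df : (forall x : R, is_derive x 1 h (dh x)) ->
  is_partial a f df -> is_partial a (fun X => h (f X)) (fun X => dh (f X) * df X).
Proof.
move=> h_dh f_df X; apply: is_derive1_comp (f_df X).
by rewrite scale0r addr0.
Qed.

Lemma is_partialV a f df : (forall X, f X != 0) -> is_partial a f df ->
  is_partial a (fun X => (f X)^-1) (fun X => - (f X) ^- 2 * df X).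
Proof.
move=> f_neq0 f_df X; have := is_deriveV (f_neq0 (X + 0 *: delta_mx a.1 a.2)) (f_df X).
by rewrite /= scale0r addr0.
Qed.

Lemma is_partial_ln a f df : (forall X, 0 < f X) -> is_partial a f df ->
  is_partial a (fun X => ln (f X)) (fun X => (f X)^-1 * df X).
Proof.
move=> f_gt0 f_df X; apply: is_derive1_comp (f_df X).
by rewrite scale0r addr0; apply: is_derive1_ln.
Qed.

Definition l1_partial1 (f : M -> R) (X : M) :=
  \sum_(k < N) \sum_(j < p) `|partial k j f X|.
Definition l1_partial2 (f : M -> R) (X : M) :=
  \sum_(k1 < N) \sum_(k2 < N) \sum_(j1 < p) \sum_(j2 < p)
    `|partial k1 j1 (partial k2 j2 f) X|.
Definition l1_partial3 (f : M -> R) (X : M) :=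
  \sum_(k1 < N) \sum_(k2 < N) \sum_(k3 < N) \sum_(j1 < p) \sum_(j2 < p) \sum_(j3 < p)
    `|partial k1 j1 (partial k2 j2 (partial k3 j3 f)) X|.

Lemma l1_partial1E f X : l1_partial1 f X = \sum_a `|partial a.1 a.2 f X|.
Proof. by rewrite sum_pair. Qed.

Lemma l1_partial2E f X :
  l1_partial2 f X = \sum_a \sum_b `|partial b.1 b.2 (partial a.1 a.2 f) X|.
Proof. by rewrite -sum_pairs2. Qed.

Lemma l1_partial3E f X : l1_partial3 f X =
  \sum_a \sum_b \sum_c `|partial c.1 c.2 (partial b.1 b.2 (partial a.1 a.2 f)) X|.
Proof. by rewrite -sum_pairs3. Qed.

Lemma sum_entries_eq0 (F : I -> R) : (N = 0 \/ p = 0)%N -> \sum_a F a = 0.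
Proof.
move=> Np0; apply: big1 => -[[k lt_kN] [j lt_jp]] _; exfalso.
by case: Np0 => n0; [rewrite n0 in lt_kN | rewrite n0 in lt_jp].
Qed.

Lemma l1_partials_eq0 f X : (N = 0 \/ p = 0)%N ->
  [/\ l1_partial1 f X = 0, l1_partial2 f X = 0 & l1_partial3 f X = 0].
Proof. by move=> Np0; rewrite l1_partial1E l1_partial2E l1_partial3E !sum_entries_eq0. Qed.

Lemma l1_partials_is f d1 d2 d3 X :
  (forall a, is_partial a f (d1 a)) ->
  (forall a b, is_partial b (d1 a) (d2 a b)) ->
  (forall a b c, is_partial c (d2 a b) (d3 a b c)) ->
  [/\ l1_partial1 f X = \sum_a `|d1 a X|,
      l1_partial2 f X = \sum_a \sum_b `|d2 a b X|
    & l1_partial3 f X = \sum_a \sum_b \sum_c `|d3 a b c X|].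
Proof.
move=> f_d1 d1_d2 d2_d3; rewrite l1_partial1E l1_partial2E l1_partial3E.
have d1E a : partial a.1 a.2 f = d1 a by case: a => k j; apply: partial_val.
have d2E a b : partial b.1 b.2 (d1 a) = d2 a b by case: b => k j; apply: partial_val.
have d3E a b c : partial c.1 c.2 (d2 a b) = d3 a b c by case: c => k j; apply: partial_val.
split; apply: eq_bigr => a _; rewrite ?d1E //; apply: eq_bigr => b _; rewrite d2E //.
by apply: eq_bigr => c _; rewrite d3E.
Qed.

End EntryDerivative.

Section Softmin.
Variables (R : realType) (N p : nat) (beta : R) (mu : 'M[R]_(N, p)).
Hypotheses (beta_gt0 : 0 < beta) (N_gt0 : (0 < N)%N) (p_gt0 : (0 < p)%N).
Local Notation M := 'M[R]_(N, p).
Local Notation I := ('I_N * 'I_p)%type.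

Definition expo (a : I) (X : M) := expR (beta * (X a.1 a.2 + mu a.1 a.2)).
Definition rowsum (k : 'I_N) (X : M) := \sum_j expo (k, j) X.
Definition invsum (X : M) := \sum_k (rowsum k X)^-1.
Definition Gsum (X : M) := - (beta^-1 * ln (invsum X)).

Definition prob (a : I) (X : M) := expo a X / rowsum a.1 X.
Definition weight (a : I) (X : M) := prob a X / (rowsum a.1 X * invsum X).

Definition kron (a b : I) : R := (a == b)%:R.
Definition rowprob (a b : I) (X : M) := (a.1 == b.1)%:R * prob (a.1, b.2) X.
Definition dlnweight (a b : I) (X : M) := kron a b - 2 * rowprob a b X + weight b X.
Definition dweight (a b : I) (X : M) := beta * (weight a X * dlnweight a b X).
Definition dprob (a b : I) (X : M) := beta * (prob a X * (kron a b - rowprob a b X)).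
Definition drowprob (a b c : I) (X : M) := (a.1 == b.1)%:R * dprob (a.1, b.2) c X.
Definition ddlnweight (a b c : I) (X : M) := - (2 * drowprob a b c X) + dweight b c X.
Definition ddweight (a b c : I) (X : M) :=
  beta * (weight a X * ddlnweight a b c X + dlnweight a b X * dweight a c X).

Lemma expo_gt0 a X : 0 < expo a X.
Proof. exact: expR_gt0. Qed.

Lemma rowsum_gt0 k X : 0 < rowsum k X.
Proof. by rewrite /rowsum; apply: (sumr_gt0 (Ordinal p_gt0)) => j; apply: expo_gt0. Qed.

Lemma invsum_gt0 X : 0 < invsum X.
Proof.
by rewrite /invsum; apply: (sumr_gt0 (Ordinal N_gt0)) => k; rewrite invr_gt0 rowsum_gt0.
Qed.

Lemma prob_ge0 a X : 0 <= prob a X.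
Proof. by rewrite divr_ge0 ?ltW ?expo_gt0 ?rowsum_gt0. Qed.

Lemma weight_ge0 a X : 0 <= weight a X.
Proof. by rewrite divr_ge0 ?prob_ge0 // ltW ?mulr_gt0 ?rowsum_gt0 ?invsum_gt0. Qed.

Lemma rowprob_ge0 a b X : 0 <= rowprob a b X.
Proof. by rewrite mulr_ge0 ?ler0n ?prob_ge0. Qed.

Lemma sum_prob k X : \sum_j prob (k, j) X = 1.
Proof. by rewrite /prob /= -mulr_suml divff // gt_eqF ?rowsum_gt0. Qed.

Lemma sum_weight X : \sum_a weight a X = 1.
Proof.
rewrite sum_pair /weight /=.
under eq_bigr => k _ do rewrite -mulr_suml sum_prob mul1r invfM.
by rewrite -mulr_suml divff // gt_eqF ?invsum_gt0.
Qed.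

Lemma sum_norm_weight X : \sum_a `|weight a X| = 1.
Proof. by rewrite (eq_bigr _ (fun a _ => ger0_norm (weight_ge0 a X))) sum_weight. Qed.

Lemma sum_le_weight (F : I -> R) c X :
  (forall a, F a <= weight a X * c) -> \sum_a F a <= c.
Proof.
move=> F_le; apply: le_trans (ler_sum _ (fun a _ => F_le a)) _.
by rewrite -mulr_suml sum_weight mul1r.
Qed.

Lemma sum_kron a : \sum_b kron a b = 1.
Proof.
rewrite /kron; under eq_bigr do rewrite eq_sym -[_%:R]mulr1.
exact: sumr_delta.
Qed.

Lemma sum_rowprob a X : \sum_b rowprob a b X = 1.
Proof.
rewrite sum_pair /rowprob /=.
under eq_bigr do rewrite -mulr_sumr sum_prob mulr1 eq_sym -[_%:R]mulr1.
exact: sumr_delta.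
Qed.

Lemma Gbeta_Gsum X : Gbeta beta mu X = Gsum X.
Proof.
rewrite /Gbeta /F0 /Gsum /invsum; congr (- (_ * ln _)); apply: eq_bigr => k _.
rewrite !mxE /Fk; under eq_bigr do rewrite mxE.
rewrite -/(rowsum k X) mulrN mulrA mulfV ?gt_eqF // mul1r expRN.
by rewrite lnK ?posrE ?rowsum_gt0.
Qed.

Lemma is_partial_expo a b :
  is_partial b (expo a) (fun X => beta * (kron a b * expo a X)).
Proof.
apply: is_partial_eq.
  apply: (is_partial_comp (fun x => is_derive_expR x)).
  apply: is_partialM (is_partial_cst _ _) _.
  exact: is_partialD (is_partial_entry _ _) (is_partial_cst _ _).
by move=> X; rewrite /expo /kron; ring.
Qed.

Lemma is_partial_rowsum k b :
  is_partial b (rowsum k) (fun X => beta * ((k == b.1)%:R * expo (k, b.2) X)).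
Proof.
apply: is_partial_eq; first by apply: is_partial_sum => j; apply: is_partial_expo.
move=> X /=; rewrite -mulr_sumr; congr (_ * _).
case: b => l j0 /=; rewrite /kron; under eq_bigr do rewrite xpair_eqE.
case: (k == l) => /=; first by rewrite mul1r sumr_delta.
by rewrite mul0r big1 // => j _; rewrite mul0r.
Qed.

Lemma is_partial_invsum b :
  is_partial b invsum (fun X => - (beta * (weight b X * invsum X))).
Proof.
apply: is_partial_eq.
  apply: is_partial_sum => k; apply: is_partialV; last exact: is_partial_rowsum.
  by move=> X; rewrite gt_eqF ?rowsum_gt0.
move=> X /=.
rewrite (eq_bigr (fun k => (k == b.1)%:R * - (beta * rowsum k X ^- 2 * expo (k, b.2) X)));
  last by move=> k _; ring.
rewrite sumr_delta /weight /prob; field.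
by rewrite !gt_eqF ?rowsum_gt0 ?invsum_gt0.
Qed.

Lemma is_partial_Gsum b : is_partial b Gsum (weight b).
Proof.
apply: is_partial_eq.
  apply: is_partialN; apply: is_partialM (is_partial_cst _ _) _.
  apply: is_partial_ln; [exact: invsum_gt0 | exact: is_partial_invsum].
move=> X /=; field.
by rewrite !gt_eqF ?invsum_gt0.
Qed.

Lemma is_partial_prob a b : is_partial b (prob a) (dprob a b).
Proof.
apply: is_partial_eq.
  apply: is_partialM (is_partial_expo _ _) (is_partialV _ (is_partial_rowsum _ _)).
  by move=> X; rewrite gt_eqF ?rowsum_gt0.
move=> X /=; rewrite /dprob /rowprob /prob /=; field.
by rewrite gt_eqF ?rowsum_gt0.
Qed.

Lemma is_partial_weight a b : is_partial b (weight a) (dweight a b).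
Proof.
apply: is_partial_eq.
  apply: is_partialM (is_partial_prob _ _) (is_partialV _ _).
    by move=> X; rewrite gt_eqF ?mulr_gt0 ?rowsum_gt0 ?invsum_gt0.
  exact: is_partialM (is_partial_rowsum _ _) (is_partial_invsum _).
move=> X /=; rewrite /dweight /dlnweight /dprob /rowprob /weight /prob /=; field.
by rewrite !gt_eqF ?rowsum_gt0 ?invsum_gt0.
Qed.

Lemma is_partial_rowprob a b c : is_partial c (rowprob a b) (drowprob a b c).
Proof.
apply: is_partial_eq; first exact: is_partialM (is_partial_cst _ _) (is_partial_prob _ _).
by move=> X; rewrite /drowprob; ring.
Qed.

Lemma is_partial_dweight a b c : is_partial c (dweight a b) (ddweight a b c).
Proof.
apply: is_partial_eq.
  apply: is_partialM (is_partial_cst _ _) (is_partialM (is_partial_weight _ _) _).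
  apply: is_partialD (is_partial_weight _ _).
  apply: is_partialD (is_partial_cst _ _) (is_partialN _).
  exact: is_partialM (is_partial_cst _ _) (is_partial_rowprob _ _ _).
by move=> X; rewrite /ddweight /ddlnweight; ring.
Qed.

Lemma sum_norm_dlnweight a X : \sum_b `|dlnweight a b X| <= 4.
Proof.
apply: (@le_trans _ _ (\sum_b (kron a b + 2 * rowprob a b X + weight b X))).
  apply: ler_sum => b _; rewrite /dlnweight ler_norml.
  have := rowprob_ge0 a b X; have := weight_ge0 b X; have : 0 <= kron a b by [].
  by move=> *; apply/andP; split; lra.
by rewrite !big_split /= -mulr_sumr sum_kron sum_rowprob sum_weight; lra.
Qed.

Lemma sum_norm_dweight a X : \sum_b `|dweight a b X| <= 4 * beta * weight a X.
Proof.
rewrite sum_normM (ger0_norm (ltW beta_gt0)) sum_normM ger0_norm ?weight_ge0 //.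
have := sum_norm_dlnweight a X; have := mulr_ge0 (ltW beta_gt0) (weight_ge0 a X).
by nra.
Qed.

Lemma sum_norm_kron_sub_rowprob a X : \sum_b `|kron a b - rowprob a b X| <= 2.
Proof.
apply: (@le_trans _ _ (\sum_b (kron a b + rowprob a b X))).
  apply: ler_sum => b _; rewrite ler_norml.
  have := rowprob_ge0 a b X; have : 0 <= kron a b by [].
  by move=> *; apply/andP; split; lra.
by rewrite big_split /= sum_kron sum_rowprob; lra.
Qed.

Lemma sum_norm_dprob a X : \sum_b `|dprob a b X| <= 2 * beta * prob a X.
Proof.
rewrite sum_normM (ger0_norm (ltW beta_gt0)) sum_normM ger0_norm ?prob_ge0 //.
have := sum_norm_kron_sub_rowprob a X; have := mulr_ge0 (ltW beta_gt0) (prob_ge0 a X).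
by nra.
Qed.

Lemma sum_norm_drowprob a b X :
  \sum_c `|drowprob a b c X| <= 2 * beta * rowprob a b X.
Proof.
rewrite sum_normM ger0_norm // /rowprob mulrCA.
by apply: ler_wpM2l => //; apply: sum_norm_dprob.
Qed.

Lemma sum_norm_ddlnweight a b X :
  \sum_c `|ddlnweight a b c X| <= 4 * beta * (rowprob a b X + weight b X).
Proof.
apply: le_trans (sum_normD _ _) _.
under eq_bigr do rewrite normrN.
rewrite sum_normM ger0_norm //.
have := sum_norm_drowprob a b X; have := sum_norm_dweight b X; lra.
Qed.

Lemma sum_norm_ddweight_row a b X : \sum_c `|ddweight a b c X| <=
  4 * beta ^+ 2 * weight a X * (rowprob a b X + weight b X + `|dlnweight a b X|).
Proof.
rewrite sum_normM (ger0_norm (ltW beta_gt0)).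
apply: le_trans (ler_wpM2l (ltW beta_gt0) (sum_norm_leibniz _ _ _ _)) _.
rewrite (ger0_norm (weight_ge0 a X)).
apply: le_trans (ler_wpM2l (ltW beta_gt0) (lerD
  (ler_wpM2l (weight_ge0 a X) (sum_norm_ddlnweight a b X))
  (ler_wpM2l (normr_ge0 _) (sum_norm_dweight a X)))) _.
by nra.
Qed.

Lemma sum_norm_ddweight a X :
  \sum_b \sum_c `|ddweight a b c X| <= 24 * beta ^+ 2 * weight a X.
Proof.
apply: le_trans (ler_sum _ (fun b _ => sum_norm_ddweight_row a b X)) _.
rewrite -mulr_sumr !big_split /= sum_rowprob sum_weight.
have := sum_norm_dlnweight a X; have := mulr_ge0 (sqr_ge0 beta) (weight_ge0 a X).
by nra.
Qed.

(* When [phi1], [phi2], [phi3] are the successive derivatives of [phi], [dcomp1],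
   [dcomp2], [dcomp3] are the derivatives of [phi \o Gsum] of order 1, 2, 3, their
   index arguments being the directions in the order of differentiation. *)
Definition dcomp1 (phi1 : R -> R) (a : I) (X : M) := phi1 (Gsum X) * weight a X.
Definition dcomp2 (phi1 phi2 : R -> R) (a b : I) (X : M) :=
  phi1 (Gsum X) * dweight a b X + weight a X * dcomp1 phi2 b X.
Definition dcomp3 (phi1 phi2 phi3 : R -> R) (a b c : I) (X : M) :=
  (phi1 (Gsum X) * ddweight a b c X + dweight a b X * dcomp1 phi2 c X)
  + (weight a X * dcomp2 phi2 phi3 b c X + dcomp1 phi2 b X * dweight a c X).

Lemma is_partial_dcomp1 (phi phi1 : R -> R) a :
  (forall x : R, is_derive x 1 phi (phi1 x)) ->
  is_partial a (fun X => phi (Gsum X)) (dcomp1 phi1 a).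
Proof. by move=> phi_phi1; apply: is_partial_comp phi_phi1 (is_partial_Gsum a). Qed.

Lemma is_partial_dcomp2 (phi1 phi2 : R -> R) a b :
  (forall x : R, is_derive x 1 phi1 (phi2 x)) ->
  is_partial b (dcomp1 phi1 a) (dcomp2 phi1 phi2 a b).
Proof.
move=> phi1_phi2.
exact: is_partialM (is_partial_dcomp1 _ phi1_phi2) (is_partial_weight _ _).
Qed.

Lemma is_partial_dcomp3 (phi1 phi2 phi3 : R -> R) a b c :
  (forall x : R, is_derive x 1 phi1 (phi2 x)) ->
  (forall x : R, is_derive x 1 phi2 (phi3 x)) ->
  is_partial c (dcomp2 phi1 phi2 a b) (dcomp3 phi1 phi2 phi3 a b c).
Proof.
move=> phi1_phi2 phi2_phi3; apply: is_partialD.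
  exact: is_partialM (is_partial_dcomp1 _ phi1_phi2) (is_partial_dweight _ _ _).
exact: is_partialM (is_partial_weight _ _) (is_partial_dcomp2 _ _ phi2_phi3).
Qed.

Lemma sum_norm_dcomp1 (phi1 : R -> R) X : \sum_a `|dcomp1 phi1 a X| = `|phi1 (Gsum X)|.
Proof. by rewrite sum_normM sum_norm_weight mulr1. Qed.

Lemma sum_norm_dcomp2_row (phi1 phi2 : R -> R) a X : \sum_b `|dcomp2 phi1 phi2 a b X| <=
  weight a X * (`|phi2 (Gsum X)| + 4 * beta * `|phi1 (Gsum X)|).
Proof.
apply: le_trans (sum_norm_leibniz _ _ _ _) _.
rewrite sum_norm_dcomp1 (ger0_norm (weight_ge0 a X)).
have := sum_norm_dweight a X; have := normr_ge0 (phi1 (Gsum X)).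
by nra.
Qed.

Lemma sum_norm_dcomp2 (phi1 phi2 : R -> R) X : \sum_a \sum_b `|dcomp2 phi1 phi2 a b X| <=
  `|phi2 (Gsum X)| + 4 * beta * `|phi1 (Gsum X)|.
Proof. by apply: sum_le_weight => a; apply: sum_norm_dcomp2_row. Qed.

Lemma sum_norm_dcomp3_cell (phi1 phi2 phi3 : R -> R) a b X :
  \sum_c `|dcomp3 phi1 phi2 phi3 a b c X| <=
  `|phi1 (Gsum X)| * \sum_c `|ddweight a b c X| + `|phi2 (Gsum X)| * `|dweight a b X|
  + weight b X * (weight a X * (`|phi3 (Gsum X)| + 8 * beta * `|phi2 (Gsum X)|)).
Proof.
apply: le_trans (sum_normD _ _) _.
apply: le_trans (lerD (sum_norm_leibniz _ _ _ _) (sum_norm_leibniz _ _ _ _)) _.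
rewrite sum_norm_dcomp1 (ger0_norm (weight_ge0 a X)).
rewrite [`|dcomp1 _ _ _|]normrM (ger0_norm (weight_ge0 b X)).
have := ler_wpM2l (weight_ge0 a X) (sum_norm_dcomp2_row phi2 phi3 b X).
have := ler_wpM2l (mulr_ge0 (normr_ge0 (phi2 (Gsum X))) (weight_ge0 b X))
  (sum_norm_dweight a X).
by nra.
Qed.

Lemma sum_norm_dcomp3_row (phi1 phi2 phi3 : R -> R) a X :
  \sum_b \sum_c `|dcomp3 phi1 phi2 phi3 a b c X| <= weight a X *
    (`|phi3 (Gsum X)| + 12 * beta * `|phi2 (Gsum X)| + 24 * beta ^+ 2 * `|phi1 (Gsum X)|).
Proof.
apply: le_trans (ler_sum _ (fun b _ => sum_norm_dcomp3_cell phi1 phi2 phi3 a b X)) _.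
rewrite !big_split /= -!mulr_sumr -mulr_suml sum_weight mul1r.
have := ler_wpM2l (normr_ge0 (phi1 (Gsum X))) (sum_norm_ddweight a X).
have := ler_wpM2l (normr_ge0 (phi2 (Gsum X))) (sum_norm_dweight a X).
by nra.
Qed.

Lemma sum_norm_dcomp3 (phi1 phi2 phi3 : R -> R) X :
  \sum_a \sum_b \sum_c `|dcomp3 phi1 phi2 phi3 a b c X| <=
  `|phi3 (Gsum X)| + 12 * beta * `|phi2 (Gsum X)| + 24 * beta ^+ 2 * `|phi1 (Gsum X)|.
Proof. by apply: sum_le_weight => a; apply: sum_norm_dcomp3_row. Qed.

Lemma l1_partials_softmin (g : R -> R) X : C3 g ->
  let m := fun X => g (Gbeta beta mu X) in
  let g1 := derive1 g in let g2 := derive1 g1 in let g3 := derive1 g2 in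
  [/\ l1_partial1 m X = `|g1 (Gsum X)|,
      l1_partial2 m X <= `|g2 (Gsum X)| + 4 * beta * `|g1 (Gsum X)|
    & l1_partial3 m X <=
      `|g3 (Gsum X)| + 12 * beta * `|g2 (Gsum X)| + 24 * beta ^+ 2 * `|g1 (Gsum X)|].
Proof.
move=> /C3_is_derive[g_g1 g1_g2 g2_g3] m g1 g2 g3.
have -> : m = (fun X => g (Gsum X)) by apply/funext => Y; rewrite /m Gbeta_Gsum.
have [-> -> ->] := l1_partials_is X (fun a => is_partial_dcomp1 a g_g1)
  (fun a b => is_partial_dcomp2 a b g1_g2) (fun a b c => is_partial_dcomp3 a b c g1_g2 g2_g3).
by split; [apply: sum_norm_dcomp1 | apply: sum_norm_dcomp2 | apply: sum_norm_dcomp3].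
Qed.

End Softmin.

Lemma l1_partials_le (R : realType) (N p : nat) (beta : R) (mu : 'M[R]_(N, p))
    (g : R -> R) (X : 'M[R]_(N, p)) : 0 < beta -> C3 g ->
  let m := fun X => g (Gbeta beta mu X) in
  let g1 := derive1 g in let g2 := derive1 g1 in let g3 := derive1 g2 in
  exists y, [/\ l1_partial1 m X <= `|g1 y|,
                l1_partial2 m X <= `|g2 y| + 4 * beta * `|g1 y|
              & l1_partial3 m X <= `|g3 y| + 12 * beta * `|g2 y| + 24 * beta ^+ 2 * `|g1 y|].
Proof.
move=> beta_gt0 g_C3 m g1 g2 g3.
have [Np0 | [N_gt0 p_gt0]] : (N = 0 \/ p = 0)%N \/ (0 < N /\ 0 < p)%N.
  by case: (posnP N) => [|?]; [left; left | case: (posnP p) => [|?]; [left; right | right]].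
- exists 0; have [-> -> ->] := l1_partials_eq0 m X Np0; have beta_ge0 := ltW beta_gt0.
  by split; rewrite ?addr_ge0 ?mulr_ge0 ?exprn_ge0 ?normr_ge0.
- exists (Gsum beta mu X).
  by have [-> le2 le3] := l1_partials_softmin mu beta_gt0 N_gt0 p_gt0 X g_C3.
Qed.

Lemma supnorm_ub (R : realType) (h : R -> R) x : ((`|h x|)%:E <= supnorm h)%E.
Proof. by apply: ereal_sup_ubound; exists x. Qed.

Lemma supnormZ_ub (R : realType) (h : R -> R) c x :
  0 <= c -> ((c * `|h x|)%:E <= c%:E * supnorm h)%E.
Proof. by move=> c_ge0; rewrite EFinM lee_wpmul2l ?lee_fin ?supnorm_ub. Qed.

Theorem lemmaF3 (R : realType) (N p : nat) (beta : R) (mu : 'M[R]_(N, p))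
    (g : R -> R) :
  0 < beta -> C3 g ->
  let m := fun X : 'M[R]_(N, p) => g (Gbeta beta mu X) in
  let g1 := derive1 g in
  let g2 := derive1 g1 in
  let g3 := derive1 g2 in
  forall X : 'M[R]_(N, p),
  [/\ ((\sum_(k < N) \sum_(j < p) `|partial k j m X|)%:E <= supnorm g1)%E,
      ((\sum_(k1 < N) \sum_(k2 < N) \sum_(j1 < p) \sum_(j2 < p)
          `|partial k1 j1 (partial k2 j2 m) X|)%:E
        <= supnorm g2 + (4 * beta)%:E * supnorm g1)%E
    & ((\sum_(k1 < N) \sum_(k2 < N) \sum_(k3 < N)
        \sum_(j1 < p) \sum_(j2 < p) \sum_(j3 < p)
          `|partial k1 j1 (partial k2 j2 (partial k3 j3 m)) X|)%:E
        <= supnorm g3 + (16 * beta)%:E * supnorm g2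
           + (24 * beta ^+ 2)%:E * supnorm g1)%E].
Proof.
move=> beta_gt0 g_C3 m g1 g2 g3 X.
have [y [le1 le2 le3]] := l1_partials_le mu X beta_gt0 g_C3.
have beta_ge0 := ltW beta_gt0.
split.
- by apply: le_trans (supnorm_ub g1 y); rewrite lee_fin.
- apply: (@le_trans _ _ (`|g2 y| + 4 * beta * `|g1 y|)%:E); first by rewrite lee_fin.
  by rewrite EFinD leeD ?supnorm_ub ?supnormZ_ub ?mulr_ge0.
- apply: (@le_trans _ _ (`|g3 y| + 16 * beta * `|g2 y| + 24 * beta ^+ 2 * `|g1 y|)%:E).
    rewrite lee_fin (le_trans le3) // lerD2r lerD2l.
    by rewrite ler_wpM2r // ler_wpM2r // ler_nat.
  by rewrite !EFinD !leeD ?supnorm_ub ?supnormZ_ub ?mulr_ge0 ?exprn_ge0.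
Qed.
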